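(* Let $M=(S,\Sigma,\delta,s_0,F)$ be a deterministic finite automaton, let $T\ge 1$ be an integer, and for each $s\in S$ let $P(\cdot\mid s)$ and $Q(\cdot\mid s)$ be probability distributions on $\Sigma$. Define probability distributions $P$ and $Q$ on $\Sigma^T$ by $P(x)=\prod_{t=1}^T P(\sigma_t\mid s_t)$ and $Q(x)=\prod_{t=1}^T Q(\sigma_t\mid s_t)$ for $x=\sigma_1\cdots\sigma_T$, where $s_1\cdots s_{T+1}$ is the state sequence induced by $x$. Let $f^*:\Sigma^T\to\{0,1\}$ be $f^*(x)=\mathbb{1}(s_{T+1}\in F)$, and let $\hat f:\Sigma^T\to\{0,1\}$ be any function. Let $\epsilon=\max_{s\in S}\mathrm{TV}(P(\sigma\mid s),Q(\sigma\mid s))$. Then $$L_Q(\hat f)\le L_P(\hat f)+2T|S|^{T+1}\epsilon.$$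
   Context: A deterministic finite automaton $M=(S,\Sigma,\delta,s_0,F)$ has a finite state set $S$, a finite alphabet $\Sigma$, a transition function $\delta:S\times\Sigma\to S$, an initial state $s_0\in S$ and a set of final states $F\subseteq S$. For a string $x=\sigma_1\cdots\sigma_T$, the induced state sequence $s_1\cdots s_{T+1}$ is given by $s_1=s_0$ and $s_{t+1}=\delta(s_t,\sigma_t)$. For a distribution $D$ on $\Sigma^T$, $L_D(\hat f)=\mathbb{P}_{x\sim D}[\hat f(x)\neq f^*(x)]$. The total variation distance between discrete distributions is defined without the factor $1/2$: $\mathrm{TV}(\mu,\nu)=\sum_a|\mu(a)-\nu(a)|$. *)

From mathcomp Require Import all_boot all_order all_algebra.
Set Implicit Arguments. Unset Strict Implicit. Unset Printing Implicit Defensive.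
Import Order.TTheory GRing.Theory Num.Theory.
Local Open Scope ring_scope.

Section DFA.
Variables (S Sigma : finType) (delta : S -> Sigma -> S) (s0 : S).

Definition dfa_run (w : seq Sigma) : S := foldl delta s0 w.

(* For x = sigma_1 ... sigma_T and 0-indexed t < T, the state s_{t+1}
   (1-indexed in the paper) is dfa_run (take t x): the state in which
   letter sigma_{t+1} = tnth x t is read. *)
Definition seq_prob (T : nat) (R : numDomainType) (Pc : S -> Sigma -> R)
  (x : T.-tuple Sigma) : R :=
  \prod_(t < T) Pc (dfa_run (take t x)) (tnth x t).

Definition fstar (T : nat) (F : {set S}) (x : T.-tuple Sigma) : bool :=
  dfa_run x \in F.
End DFA.

Definition loss (Sigma : finType) (T : nat) (R : numDomainType)
  (D : T.-tuple Sigma -> R) (fhat f : T.-tuple Sigma -> bool) : R :=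
  \sum_(x : T.-tuple Sigma | fhat x != f x) D x.

(* total variation without the factor 1/2 *)
Definition TV (Sigma : finType) (R : numDomainType) (mu nu : Sigma -> R) : R :=
  \sum_(a : Sigma) `|mu a - nu a|.

Definition is_distr (Sigma : finType) (R : numDomainType) (mu : Sigma -> R) : Prop :=
  (forall a, 0 <= mu a) /\ \sum_(a : Sigma) mu a = 1.

(** The probability of a word factors letter by letter along the run of the
    automaton, so the hybrid argument (swap the first letter's distribution,
    then recurse from the next state) bounds the L1 distance between the two
    word distributions by [T * eps].  Changing the distribution under which
    the error event is measured costs at most that L1 distance, which is far
    below [2 T |S|^(T+1) eps]; the argument does not need [T >= 1]. *)

From mathcomp Require Import all_boot all_order all_algebra.
From mathcomp Require Import ring.
Set Implicit Arguments. Unset Strict Implicit. Unset Printing Implicit Defensive.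
Import Order.TTheory GRing.Theory Num.Theory.
Local Open Scope ring_scope.

Lemma sum_tupleS (Sigma : finType) (V : nmodType) (n : nat)
    (f : n.+1.-tuple Sigma -> V) :
  \sum_(x : n.+1.-tuple Sigma) f x =
  \sum_(a : Sigma) \sum_(x : n.-tuple Sigma) f [tuple of a :: x].
Proof.
rewrite pair_big /=.
rewrite (reindex (fun p : Sigma * n.-tuple Sigma => [tuple of p.1 :: p.2])) //=.
exists (fun x : n.+1.-tuple Sigma => (thead x, [tuple of behead x])).
  by move=> [a x] _ /=; congr pair; apply: val_inj.
by move=> [[|a w] ?] _; apply: val_inj.
Qed.

Lemma sum_tuple0 (Sigma : finType) (V : nmodType) (f : 0.-tuple Sigma -> V) :
  \sum_(x : 0.-tuple Sigma) f x = f [tuple].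
Proof. by rewrite (big_pred1 [tuple]) // => x; apply/esym/eqP; exact: tuple0. Qed.

Lemma normB_mul_le (R : numDomainType) (a b x y : R) :
  0 <= b -> 0 <= x -> `|a * x - b * y| <= `|a - b| * x + b * `|x - y|.
Proof.
move=> b_ge0 x_ge0.
have -> : a * x - b * y = (a - b) * x + b * (x - y) by ring.
apply: (le_trans (ler_normD _ _)).
by rewrite !normrM (ger0_norm x_ge0) (ger0_norm b_ge0).
Qed.

Lemma loss_le_add_l1 (Sigma : finType) (T : nat) (R : realDomainType)
    (D D' : T.-tuple Sigma -> R) (fhat f : T.-tuple Sigma -> bool) :
  loss D' fhat f <= loss D fhat f + \sum_x `|D x - D' x|.
Proof.
rewrite /loss [X in _ <= _ + X](bigID (fun x => fhat x != f x)) /= addrA.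
rewrite -big_split /= -[leLHS]addr0 lerD ?sumr_ge0 //.
apply: ler_sum => x _; rewrite -lerBlDl distrC; exact: ler_norm.
Qed.

Section WordProb.
Variables (R : numDomainType) (S Sigma : finType) (delta : S -> Sigma -> S).

Fixpoint word_prob (P : S -> Sigma -> R) (s : S) (w : seq Sigma) : R :=
  if w is a :: w' then P s a * word_prob P (delta s a) w' else 1.

Lemma prod_run_word_prob (P : S -> Sigma -> R) s (w : seq Sigma) (a0 : Sigma) :
  \prod_(t < size w) P (dfa_run delta s (take t w)) (nth a0 w t)
  = word_prob P s w.
Proof.
elim: w s => [|a w IH] s /=; first by rewrite big_ord0.
by rewrite big_ord_recl /= -IH.
Qed.

Lemma seq_prob_word_prob (T : nat) (P : S -> Sigma -> R) s
    (x : T.-tuple Sigma) :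
  seq_prob delta s P x = word_prob P s x.
Proof.
rewrite /seq_prob; case: T x => [|n] x; first by rewrite tuple0 big_ord0.
rewrite -(prod_run_word_prob _ _ _ (thead x)) size_tuple.
by apply: eq_bigr => t _; rewrite (tnth_nth (thead x)).
Qed.

Variables (P Q : S -> Sigma -> R).
Hypothesis hP : forall s, is_distr (P s).
Hypothesis hQ : forall s, is_distr (Q s).

Lemma word_prob_ge0 s w : 0 <= word_prob P s w.
Proof. by elim: w s => [|a w IH] s //=; rewrite mulr_ge0 //; case: (hP s). Qed.

Lemma sum_word_prob n s : \sum_(x : n.-tuple Sigma) word_prob P s x = 1.
Proof.
elim: n s => [|n IH] s; first by rewrite sum_tuple0.
rewrite sum_tupleS /=.
under eq_bigr => a _ do rewrite -mulr_sumr IH mulr1.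
by case: (hP s).
Qed.

Lemma sum_dist_word_prob (eps : R) :
    (forall s, TV (P s) (Q s) <= eps) -> forall n s,
  \sum_(x : n.-tuple Sigma) `|word_prob P s x - word_prob Q s x| <= n%:R * eps.
Proof.
move=> heps; elim=> [|n IH] s; first by rewrite sum_tuple0 subrr normr0 mul0r.
rewrite sum_tupleS /=.
apply: (@le_trans _ _ (\sum_a \sum_(x : n.-tuple Sigma)
  (`|P s a - Q s a| * word_prob P (delta s a) x
   + Q s a * `|word_prob P (delta s a) x - word_prob Q (delta s a) x|))).
  apply: ler_sum => a _; apply: ler_sum => x _.
  by apply: normB_mul_le; [case: (hQ s) | exact: word_prob_ge0].
under eq_bigr => a _ do rewrite big_split /=.
rewrite big_split /= mulrSr mulrDl mul1r addrC; apply: lerD.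
  have [Q_ge0 sum_Q] := hQ s.
  apply: (@le_trans _ _ (\sum_a Q s a * (n%:R * eps))).
    by apply: ler_sum => a _; rewrite -mulr_sumr ler_wpM2l.
  by rewrite -mulr_suml sum_Q mul1r.
under eq_bigr => a _ do rewrite -mulr_sumr sum_word_prob mulr1.
exact: heps.
Qed.

End WordProb.

Theorem theorem4p3 (R : realFieldType) (S Sigma : finType)
  (delta : S -> Sigma -> S) (s0 : S) (F : {set S}) (T : nat) (hT : (1 <= T)%N)
  (P Q : S -> Sigma -> R)
  (hP : forall s, is_distr (P s)) (hQ : forall s, is_distr (Q s))
  (fhat : T.-tuple Sigma -> bool) :
  let eps := \big[Num.max/0]_(s : S) TV (P s) (Q s) in
  loss (seq_prob delta s0 Q) fhat (fstar delta s0 F)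
  <= loss (seq_prob delta s0 P) fhat (fstar delta s0 F)
     + (2 * T * #|S| ^ T.+1)%:R * eps.
Proof.
rewrite /=; set eps := \big[Num.max/0]_s TV (P s) (Q s).
have heps s : TV (P s) (Q s) <= eps by exact: le_bigmax.
have eps_ge0 : 0 <= eps by apply: le_trans (heps s0); apply: sumr_ge0.
apply: (le_trans (loss_le_add_l1 (seq_prob delta s0 P) _ _ _)).
rewrite lerD2l.
under eq_bigr => x _ do rewrite !seq_prob_word_prob.
apply: (le_trans (sum_dist_word_prob delta hP hQ heps T s0)).
have S_gt0 : (0 < #|S|)%N by apply/card_gt0P; exists s0.
by rewrite ler_wpM2r // ler_nat mulnC mulnA leq_pmull // muln_gt0 expn_gt0 S_gt0.
Qed.
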